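(* Let $G$ be a simple graph with $n$ vertices, let $\theta_1(G),\ldots,\theta_n(G)$ be the eigenvalues of its Seidel matrix $S(G)$, and let $\theta_1(K_n),\ldots,\theta_n(K_n)$ be the eigenvalues of the Seidel matrix of the complete graph $K_n$. Then (i) $\theta_1(G)^2+\cdots+\theta_n(G)^2=(n-1)^2+n-1$; (ii) $\theta_1(G)^4+\cdots+\theta_n(G)^4\le \theta_1(K_n)^4+\cdots+\theta_n(K_n)^4=(n-1)^4+n-1$; (iii) $\max_{1\le i\le n}\theta_i(G)^2\le \max_{1\le i\le n}\theta_i(K_n)^2=(n-1)^2$.
   Context: For a simple graph $G$ with vertex set $\{v_1,\ldots,v_n\}$, the Seidel matrix $S(G)=(s_{ij})$ is the $n\times n$ matrix with $s_{ii}=0$ for all $i$, and for $i\ne j$, $s_{ij}=-1$ if $v_i$ and $v_j$ are adjacent and $s_{ij}=1$ otherwise. Its eigenvalues are real. $K_n$ denotes the complete graph on $n$ vertices, whose Seidel matrix is $I-J$. *)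

From mathcomp Require Import all_boot all_order all_algebra.
From mathcomp Require Import reals.
Set Implicit Arguments. Unset Strict Implicit. Unset Printing Implicit Defensive.
Import Order.TTheory GRing.Theory Num.Theory.
Local Open Scope ring_scope.

Definition simple_graph (n : nat) (adj : rel 'I_n) : Prop :=
  symmetric adj /\ irreflexive adj.

Definition seidel (R : pzRingType) (n : nat) (adj : rel 'I_n) : 'M[R]_n :=
  \matrix_(i, j) (if i == j then 0 else if adj i j then -1 else 1).

Definition complete_graph (n : nat) : rel 'I_n := fun i j => i != j.

(* The moments of the Seidel spectrum are traces of powers of S.  S has zero
   diagonal and entries of modulus one elsewhere, so tr S^2 = n(n-1) for every
   graph, and tr S^4 is the sum of the squared entries of S^2, whose diagonal is
   n-1 and whose off-diagonal entries are sums of n-2 signs; for K_n, where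
   S = I - J, all these signs agree, which maximises tr S^4.  Each eigenvalue
   has modulus at most the column sums n-1 of |S|, and for K_n the all-ones
   vector attains 1-n. *)
From mathcomp Require Import all_boot all_order all_algebra.
From mathcomp Require Import reals.
From mathcomp Require Import ring.
Import Order.TTheory GRing.Theory Num.Theory.
Local Open Scope ring_scope.
Set Implicit Arguments. Unset Strict Implicit.

Lemma comp_poly_Xn_inj (R : nzSemiRingType) (k : nat) : (0 < k)%N ->
  injective (fun p : {poly R} => p \Po 'X^k).
Proof.
move=> k_gt0 p q /(congr1 (fun s : {poly R} => s`_(k * _)%N)) eq_pq.
by apply/polyP => i; have := eq_pq i; rewrite /= !coef_comp_poly_Xn // dvdn_mulr // mulKn.
Qed.

Lemma char_poly_mxsq (R : comNzRingType) n (A : 'M[R]_n) (t : 'I_n -> R) :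
  char_poly A = \prod_(i < n) ('X - (t i)%:P) ->
  char_poly (A *m A) = \prod_(i < n) ('X - (t i ^+ 2)%:P).
Proof.
move=> charA; apply: (@comp_poly_Xn_inj _ 2) => //=.
have compXn2_mx :
    map_mx (comp_poly 'X^2) (char_poly_mx (A *m A)) = 'X^2%:M - map_mx polyC (A *m A).
  by apply/matrixP => i j; rewrite /char_poly_mx !mxE raddfB raddfMn /= comp_polyX comp_polyC.
have compN_mx : map_mx (comp_poly (- 'X)) (char_poly_mx A) = - ('X%:M + map_mx polyC A).
  apply/matrixP => i j; rewrite /char_poly_mx !mxE raddfB raddfMn /= comp_polyX comp_polyC.
  by rewrite opprD mulNrn.
(* [X^2 - A^2 = (X - A)(X + A)], and [det (X + A)] is [char_poly A] evaluated at [-X], up to sign *)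
have factor_sq : 'X^2%:M - map_mx polyC (A *m A) = char_poly_mx A *m ('X%:M + map_mx polyC A).
  rewrite map_mxM mulmxDr !mulmxBl -scalar_mxM scalar_mxC.
  by rewrite expr2 addrA subrK.
have det_plus : \det ('X%:M + map_mx polyC A) = \prod_(i < n) ('X + (t i)%:P).
  rewrite -[_ + _]opprK -compN_mx -scaleN1r detZ det_map_mx -/(char_poly A) charA.
  rewrite rmorph_prod -{1}(card_ord n) -prodrN; apply: eq_bigr => i _.
  by rewrite raddfB /= comp_polyX comp_polyC opprB opprK addrC.
rewrite /char_poly -det_map_mx compXn2_mx factor_sq det_mulmx -/(char_poly A) charA.
rewrite det_plus -big_split rmorph_prod; apply: eq_bigr => i _ /=.
by rewrite raddfB /= comp_polyX comp_polyC rmorphXn /=; ring.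
Qed.

Lemma mxtrace_char_roots (R : comNzRingType) n (A : 'M[R]_n) (t : 'I_n -> R) :
  (0 < n)%N -> char_poly A = \prod_(i < n) ('X - (t i)%:P) ->
  \tr A = \sum_i t i.
Proof.
move=> n_gt0 charA; apply: oppr_inj; rewrite -char_poly_trace // charA.
have size_t : size [seq t i | i <- enum 'I_n] = n by rewrite size_map size_enum_ord.
have -> : \prod_(i < n) ('X - (t i)%:P) = \prod_(x <- [seq t i | i <- enum 'I_n]) ('X - x%:P).
  by rewrite big_map big_enum.
by rewrite -[in n.-1]size_t coefPn_prod_XsubC ?size_t -?lt0n // big_map big_enum.
Qed.

Lemma eigenvalue_char_roots (F : fieldType) n (A : 'M[F]_n) (t : 'I_n -> F) a :
  char_poly A = \prod_(i < n) ('X - (t i)%:P) ->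
  eigenvalue A a <-> exists i, a = t i.
Proof.
move=> charA; rewrite eigenvalue_root_char charA rootE horner_prod.
split=> [/prodf_eq0[i _]|[i ->]]; last by apply/prodf_eq0; exists i; rewrite // hornerXsubC subrr.
by rewrite hornerXsubC subr_eq0 => /eqP ->; exists i.
Qed.

Lemma mxtrace_mul_trmx (R : comPzRingType) m n (B : 'M[R]_(m, n)) :
  \tr (B *m B^T) = \sum_i \sum_j B i j ^+ 2.
Proof. by apply: eq_bigr => i _; rewrite mxE; apply: eq_bigr => j _; rewrite mxE expr2. Qed.

(* Gershgorin: look at the coordinate of largest modulus of an eigenvector. *)
Lemma eigenvalue_norm_le (R : realFieldType) n (A : 'M[R]_n) (c : R) a :
  (forall j, \sum_i `|A i j| <= c) -> eigenvalue A a -> `|a| <= c.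
Proof.
move=> colsum /eigenvalueP[v eig_v v_neq0].
have [j0 _] : exists j0 : 'I_n, true.
  by case: n A v eig_v v_neq0 {colsum} => [|n'] A v _; [rewrite thinmx0 eqxx | exists ord0].
have [j _ vj_max] := @arg_maxP _ _ _ j0 xpredT (fun j => `|v 0 j|) isT.
have vj_gt0 : 0 < `|v 0 j|.
  rewrite normr_gt0; apply: contraNneq v_neq0 => vj0; apply/eqP/rowP => i.
  by rewrite mxE; apply/eqP; rewrite -normr_le0 -(normr0 R) -vj0; apply: vj_max.
rewrite -(ler_pM2r vj_gt0) -normrM.
have <- : \sum_i v 0 i * A i j = a * v 0 j.
  by have := congr1 (fun M : 'rV_n => M 0 j) eig_v; rewrite !mxE.
apply: le_trans (ler_norm_sum _ _ _) _; rewrite mulrC.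
apply: le_trans (ler_wpM2l (normr_ge0 _) (colsum j)); rewrite mulr_sumr.
by apply: ler_sum => i _; rewrite normrM ler_wpM2r //; apply: vj_max.
Qed.

Lemma sumr_ord_eq (R : pzSemiRingType) n (i : 'I_n) : \sum_k (i == k)%:R = 1 :> R.
Proof.
by rewrite (bigD1 i) //= eqxx big1 ?addr0 // => k; rewrite eq_sym => /negbTE ->.
Qed.

Lemma sumr_ord_neq (R : pzRingType) n (i : 'I_n) : \sum_k (i != k)%:R = n%:R - 1 :> R.
Proof.
transitivity (\sum_(k < n) (1 - (i == k)%:R : R)).
  by apply: eq_bigr => k _; case: eqP; rewrite ?subrr ?subr0.
by rewrite sumrB sumr_const card_ord sumr_ord_eq.
Qed.

Lemma sumr_ord_neq2 (R : comPzRingType) n (i j : 'I_n) : i != j ->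
  \sum_k (i != k)%:R * (k != j)%:R = n%:R - 2 :> R.
Proof.
move=> neq_ij; transitivity (\sum_(k < n) (1 - (i == k)%:R - (j == k)%:R : R)).
  apply: eq_bigr => k _; rewrite [k == j]eq_sym.
  case: (eqVneq i k) => [<-|_]; first by rewrite [j == i]eq_sym (negbTE neq_ij) /=; ring.
  by case: (eqVneq j k) => [_|_] /=; ring.

by rewrite !sumrB sumr_const card_ord !sumr_ord_eq; ring.
Qed.

Section SeidelEntries.
Variables (n : nat) (adj : rel 'I_n).

Lemma trmx_seidel (R : pzRingType) : simple_graph adj -> (seidel R adj)^T = seidel R adj.
Proof. by move=> [adj_sym _]; apply/matrixP => i j; rewrite !mxE eq_sym adj_sym. Qed.

Lemma seidel_sqr (R : pzRingType) i j : seidel R adj i j ^+ 2 = (i != j)%:R.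
Proof. by rewrite mxE; case: eqP => _; rewrite ?expr0n //; case: adj; rewrite ?sqrrN expr1n. Qed.

Lemma normr_seidel (R : numDomainType) i j : `|seidel R adj i j| = (i != j)%:R.
Proof. by rewrite mxE; case: eqP => _; rewrite ?normr0 //; case: adj; rewrite ?normrN normr1. Qed.

Lemma mxsq_seidel_diag (R : pzRingType) i : simple_graph adj ->
  (seidel R adj *m seidel R adj) i i = n%:R - 1.
Proof.
move=> adj_simple; rewrite mxE -(sumr_ord_neq _ i); apply: eq_bigr => k _.
by rewrite -[in X in _ * X](trmx_seidel R adj_simple) [in X in _ * X]mxE -expr2 seidel_sqr.
Qed.

Lemma normr_mxsq_seidel_offdiag (R : numDomainType) i j : i != j ->
  `|(seidel R adj *m seidel R adj) i j| <= n%:R - 2.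
Proof.
move=> neq_ij; rewrite mxE -(sumr_ord_neq2 _ neq_ij).
apply: le_trans (ler_norm_sum _ _ _) _.
by apply: ler_sum => k _; rewrite normrM !normr_seidel.
Qed.

End SeidelEntries.

Lemma seidel_complete (R : pzRingType) n (i j : 'I_n) :
  seidel R (@complete_graph n) i j = - (i != j)%:R.
Proof. by rewrite mxE /complete_graph; case: eqP; rewrite ?oppr0. Qed.

Lemma mxsq_seidel_complete (R : comPzRingType) n (i j : 'I_n) :
  (seidel R (@complete_graph n) *m seidel R (@complete_graph n)) i j
    = n%:R - 2 + (i == j)%:R.
Proof.
rewrite mxE; under eq_bigr do rewrite !seidel_complete mulrNN.
case: (eqVneq i j) => [<-|neq_ij]; last by rewrite addr0 sumr_ord_neq2.
have -> : n%:R - 2 + 1%:R = n%:R - 1 :> R by ring.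
rewrite -(sumr_ord_neq _ i); apply: eq_bigr => k _.
by rewrite [in X in _ * X]eq_sym -natrM mulnb andbb.
Qed.

Lemma sqr_mxsq_seidel_le (R : realDomainType) n (adj : rel 'I_n) i j :
  simple_graph adj ->
  ((seidel R adj *m seidel R adj) i j) ^+ 2
    <= ((seidel R (@complete_graph n) *m seidel R (@complete_graph n)) i j) ^+ 2.
Proof.
move=> adj_simple; rewrite mxsq_seidel_complete.
case: (eqVneq i j) => [<-|neq_ij].
  have -> : n%:R - 2 + 1%:R = n%:R - 1 :> R by ring.
  by rewrite mxsq_seidel_diag.
have off_le := normr_mxsq_seidel_offdiag adj R neq_ij.
rewrite addr0 -real_normK ?num_real // ler_sqr ?nnegrE ?normr_ge0 //.
exact: le_trans (normr_ge0 _) off_le.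
Qed.

Lemma sum_sqr_mxsq_seidel_complete (R : comPzRingType) n :
  \sum_(i < n) \sum_(j < n)
      ((seidel R (@complete_graph n) *m seidel R (@complete_graph n)) i j) ^+ 2
    = (n%:R - 1) ^+ 4 + n%:R - 1.
Proof.
have row_sum (i : 'I_n) : \sum_j (n%:R - 2 + (i == j)%:R) ^+ 2
    = n%:R * (n%:R - 2) ^+ 2 + (2 * (n%:R - 2) + 1) :> R.
  rewrite (eq_bigr (fun j => (n%:R - 2) ^+ 2 + (2 * (n%:R - 2) + 1) * (i == j)%:R)); last first.
    by move=> j _; case: (i == j) => /=; ring.
  by rewrite big_split /= sumr_const card_ord -mulr_sumr sumr_ord_eq -mulr_natl; ring.
under eq_bigr do under eq_bigr do rewrite mxsq_seidel_complete.
by under eq_bigr do rewrite row_sum; rewrite sumr_const card_ord -mulr_natl; ring.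
Qed.

Lemma sum_pow4_char_roots (R : comNzRingType) n (A : 'M[R]_n) (t : 'I_n -> R) :
  (0 < n)%N -> A^T = A -> char_poly A = \prod_(i < n) ('X - (t i)%:P) ->
  \sum_i t i ^+ 4 = \sum_i \sum_j ((A *m A) i j) ^+ 2.
Proof.
move=> n_gt0 symA charA; rewrite -mxtrace_mul_trmx trmx_mul symA.
rewrite (mxtrace_char_roots n_gt0 (char_poly_mxsq (char_poly_mxsq charA))).
by apply: eq_bigr => i _; rewrite -exprM.
Qed.

Lemma sqr_eigenvalue_seidel_le (R : realFieldType) n (adj : rel 'I_n) a :
  eigenvalue (seidel R adj) a -> a ^+ 2 <= (n%:R - 1) ^+ 2.
Proof.
move/eigenvalue_norm_le => /(_ (n%:R - 1)) norm_le.
have {}norm_le : `|a| <= n%:R - 1.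
  by apply: norm_le => j; under eq_bigr do rewrite normr_seidel eq_sym; rewrite sumr_ord_neq.
rewrite -real_normK ?num_real // ler_sqr ?nnegrE ?normr_ge0 //.
exact: le_trans (normr_ge0 _) norm_le.
Qed.

Lemma eigenvalue_seidel_complete (F : fieldType) n : (0 < n)%N ->
  eigenvalue (seidel F (@complete_graph n)) (1 - n%:R).
Proof.
move=> n_gt0; apply/eigenvalueP; exists (const_mx 1).
  apply/rowP => j; rewrite !mxE mulr1.
  under eq_bigr do rewrite mxE mul1r seidel_complete eq_sym.
  by rewrite sumrN sumr_ord_neq opprB.
by apply/eqP => /rowP /(_ (Ordinal n_gt0)); rewrite !mxE => /eqP; rewrite oner_eq0.
Qed.

Theorem lemma3p1 (R : realType) (n : nat) (adj : rel 'I_n)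
  (theta phi : 'I_n -> R) :
  (0 < n)%N ->
  simple_graph adj ->
  char_poly (seidel R adj) = \prod_(i < n) ('X - (theta i)%:P) ->
  char_poly (seidel R (@complete_graph n)) = \prod_(i < n) ('X - (phi i)%:P) ->
  [/\ \sum_(i < n) theta i ^+ 2 = (n%:R - 1) ^+ 2 + n%:R - 1,
      \sum_(i < n) theta i ^+ 4 <= \sum_(i < n) phi i ^+ 4,
      \sum_(i < n) phi i ^+ 4 = (n%:R - 1) ^+ 4 + n%:R - 1,
      \big[Num.max/0]_(i < n) (theta i ^+ 2) <= \big[Num.max/0]_(i < n) (phi i ^+ 2)
    & \big[Num.max/0]_(i < n) (phi i ^+ 2) = (n%:R - 1) ^+ 2].
Proof.
move=> n_gt0 adj_simple charS charK.
have complete_simple : simple_graph (@complete_graph n).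
  by split=> [i j|i]; rewrite /complete_graph ?eqxx // eq_sym.
have pow4K := sum_pow4_char_roots n_gt0 (trmx_seidel R complete_simple) charK.
have max_phi : \big[Num.max/0]_(i < n) (phi i ^+ 2) = (n%:R - 1) ^+ 2.
  apply/le_anti/andP; split.
    apply: bigmax_le => [|i _]; first exact: sqr_ge0.
    by apply: sqr_eigenvalue_seidel_le; apply/(eigenvalue_char_roots _ charK); exists i.
  have [i eq_phi] := (eigenvalue_char_roots _ charK).1 (eigenvalue_seidel_complete R n_gt0).
  by apply: le_trans (le_bigmax _ _ i); rewrite -eq_phi -sqrrN opprB.
split.
- rewrite -(mxtrace_char_roots n_gt0 (char_poly_mxsq charS)).
  rewrite /mxtrace (eq_bigr _ (fun i _ => mxsq_seidel_diag R i adj_simple)).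
  by rewrite sumr_const card_ord -mulr_natl; ring.
- rewrite (sum_pow4_char_roots n_gt0 (trmx_seidel R adj_simple) charS) pow4K.
  by apply: ler_sum => i _; apply: ler_sum => j _; apply: sqr_mxsq_seidel_le.
- by rewrite pow4K sum_sqr_mxsq_seidel_complete.
- rewrite max_phi; apply: bigmax_le => [|i _]; first exact: sqr_ge0.
  by apply: sqr_eigenvalue_seidel_le; apply/(eigenvalue_char_roots _ charS); exists i.
- exact: max_phi.
Qed.
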